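(* Let $M$ be an entrywise nonnegative $m\times n$ real matrix and let $M=AW$ be a stable nonnegative matrix factorization with $A\in\mathbb{R}_{\ge0}^{m\times r}$, $W\in\mathbb{R}_{\ge0}^{r\times n}$. Then for every column index $i$, the support of $W_i$ corresponds to a linearly independent set of columns of $A$.
   Context: $W_i$ denotes the $i$-th column of $W$; the support of a vector is the set of indices of its nonzero entries. $\mathrm{aff}(A)=\{\sum_k\alpha_kA_k:\alpha_k\ge0\}$ for columns $A_k$. A subset $S\subseteq[r]$ of columns of $A$ is admissible for $v\in\mathbb{R}^m$ if $v\in\mathrm{aff}(A_S)$ ($A_S$ = columns of $A$ in $S$); a subset $T\subseteq[r]$ of rows of $W$ is admissible for a row vector $u$ if $u$ is a nonnegative combination of the rows of $W$ indexed by $T$. Lexicographic ordering on subsets of $[r]$: if $|S|<|T|$ then $S$ precedes $T$; equal-size subsets compared by standard lexicographic order. $M=AW$ is stable if, with $S_i$ the lexicographically first subset of columns of $A$ admissible for the column $M_i$ and $T_j$ the lexicographically first subset of rows of $W$ admissible for the row $M^j$, each $W_i$ is supported in $S_i$ and each row $A^j$ of $A$ is supported in $T_j$. *)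

From HB Require Import structures.
From mathcomp Require Import all_boot all_order all_algebra.
Set Implicit Arguments. Unset Strict Implicit. Unset Printing Implicit Defensive.
Import Order.TTheory GRing.Theory Num.Theory.
Local Open Scope ring_scope.

Fixpoint lex_le (s t : seq nat) : bool :=
  match s, t with
  | [::], _ => true
  | _ :: _, [::] => false
  | x :: s', y :: t' => ((x < y)%N || ((x == y) && lex_le s' t'))
  end.

(* Ordering on subsets of [r]: smaller cardinality first, equal-size subsets
   compared lexicographically on their increasingly sorted elements
   (enum of a set of ordinals lists them in increasing order). *)
Definition subset_le (r : nat) (S T : {set 'I_r}) : bool :=
  (#|S| < #|T|)%N ||
  ((#|S| == #|T|) && lex_le (map val (enum S)) (map val (enum T))).

Definition col_admissible (R : realFieldType) (m r : nat)
    (A : 'M[R]_(m, r)) (v : 'cV[R]_m) (S : {set 'I_r}) : Prop :=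
  exists x : 'cV[R]_r,
    (forall k, 0 <= x k 0) /\ (forall k, k \notin S -> x k 0 = 0) /\ v = A *m x.

Definition row_admissible (R : realFieldType) (r n : nat)
    (W : 'M[R]_(r, n)) (u : 'rV[R]_n) (T : {set 'I_r}) : Prop :=
  exists y : 'rV[R]_r,
    (forall k, 0 <= y 0 k) /\ (forall k, k \notin T -> y 0 k = 0) /\ u = y *m W.

Definition lex_first_col (R : realFieldType) (m r : nat)
    (A : 'M[R]_(m, r)) (v : 'cV[R]_m) (S : {set 'I_r}) : Prop :=
  col_admissible A v S /\ forall S', col_admissible A v S' -> subset_le S S'.

Definition lex_first_row (R : realFieldType) (r n : nat)
    (W : 'M[R]_(r, n)) (u : 'rV[R]_n) (T : {set 'I_r}) : Prop :=
  row_admissible W u T /\ forall T', row_admissible W u T' -> subset_le T T'.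

Definition stable (R : realFieldType) (m r n : nat) (M : 'M[R]_(m, n))
    (A : 'M[R]_(m, r)) (W : 'M[R]_(r, n)) : Prop :=
  (forall (i : 'I_n) (S : {set 'I_r}), lex_first_col A (col i M) S ->
     forall k, W k i != 0 -> k \in S) /\
  (forall (j : 'I_m) (T : {set 'I_r}), lex_first_row W (row j M) T ->
     forall k, A j k != 0 -> k \in T).


(* Let D be the support of W_i; x := W_i witnesses that D is admissible for
   M_i = A x.  If the columns of A indexed by D admitted a kernel vector c
   supported in D, moving from x along c (or -c) until a coordinate vanishes,
   as in Caratheodory's theorem, would give an admissible set D minus a point.
   But stability puts D inside the lexicographically first admissible set S,
   which has minimal cardinality among admissible sets, so no admissible set
   is smaller than D. *)

From HB Require Import structures.
From mathcomp Require Import all_boot all_order all_algebra.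
From mathcomp Require Import lra.
From Stdlib Require Import Classical.

Set Implicit Arguments.
Unset Strict Implicit.
Unset Printing Implicit Defensive.

Import Order.TTheory GRing.Theory Num.Theory.
Local Open Scope ring_scope.

Lemma lex_le_total : total lex_le.
Proof.
move=> s t; elim: s t => [|x s IH] [|y t] //=.
by case: (ltngtP x y) => //=.
Qed.

Lemma lex_le_trans : transitive lex_le.
Proof.
move=> t s u; elim: s t u => [|x s IH] [|y t] [|z u] //=.
move=> /orP[xy|/andP[/eqP-> st]] /orP[yz|/andP[/eqP<- tu]].
- by rewrite (ltn_trans xy yz).
- by rewrite xy.
- by rewrite yz.
- by rewrite eqxx (IH _ _ st tu) orbT.
Qed.

Lemma subset_le_total r : total (@subset_le r).
Proof.
move=> S T; have := lex_le_total (map val (enum S)) (map val (enum T)).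
by rewrite /subset_le; case: (ltngtP #|S| #|T|).
Qed.

Lemma subset_le_trans r : transitive (@subset_le r).
Proof.
move=> T S U; rewrite /subset_le.
move=> /orP[ST|/andP[/eqP-> st]] /orP[TU|/andP[/eqP<- tu]].
- by rewrite (ltn_trans ST TU).
- by rewrite ST.
- by rewrite TU.
- by rewrite eqxx (lex_le_trans st tu) orbT.
Qed.

Lemma subset_le_card r (S T : {set 'I_r}) : subset_le S T -> (#|S| <= #|T|)%N.
Proof. by case/orP=> [/ltnW|/andP[/eqP-> _]]. Qed.

Lemma exists_le_min (T : eqType) (le : rel T) (P : T -> Prop) (s : seq T) :
    total le -> transitive le -> (exists2 a, a \in s & P a) ->
  exists2 a, P a & forall b, b \in s -> P b -> le a b.
Proof.
move=> le_total le_trans; elim: s => [|b s IH]; first by case.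
move=> exPbs.
have [/IH [a Pa a_min] | noPs] := classic (exists2 a, a \in s & P a).
- have [Pb|nPb] := classic (P b); last first.
    by exists a => // c; rewrite inE => /predU1P[->|/a_min].
  have [ab|ba] := orP (le_total a b).
    by exists a => // c; rewrite inE => /predU1P[->|/a_min].
  exists b => // c; rewrite inE => /predU1P[->|cs Pc].
    by have /orP[] := le_total b b.
  exact: le_trans ba (a_min c cs Pc).
- case: exPbs => a; rewrite inE => /predU1P[-> Pb|a_s Pa]; last by case: noPs; exists a.
  exists b => // c; rewrite inE => /predU1P[->|cs Pc]; last by case: noPs; exists c.
  by have /orP[] := le_total b b.
Qed.

Lemma lex_first_col_exists (R : realFieldType) m r (A : 'M[R]_(m, r)) v S0 :
  col_admissible A v S0 -> exists S, lex_first_col A v S.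
Proof.
move=> adm_S0.
have [|S adm_S S_min] := @exists_le_min _ _ (col_admissible A v) (enum [set: {set 'I_r}])
  (@subset_le_total r) (@subset_le_trans r).
  by exists S0; rewrite ?mem_enum ?inE.
by exists S; split=> // S'; apply: S_min; rewrite mem_enum inE.
Qed.

Definition supported_in (R : zmodType) r (c : 'cV[R]_r) (D : {set 'I_r}) :=
  forall k, k \notin D -> c k 0 = 0.

Lemma free_cols_of_ker (F : fieldType) m r (A : 'M[F]_(m, r)) (D : {set 'I_r}) :
    (forall c, supported_in c D -> A *m c = 0 -> c = 0) ->
  free [seq col k A | k <- enum D].
Proof.
move=> kerA; case eD: (enum D) => [|d e]; first exact: nil_free.
rewrite -eD; set X := map _ _; have szX : size X = size (enum D) by rewrite size_map.
have Dd j : (j < size X)%N -> nth d (enum D) j \in D.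
  by move=> ltjX; rewrite -mem_enum mem_nth // -szX.
rewrite -(in_tupleE X); apply/freeP => a sum_a0 j.
pose c := \sum_(j < size X) a j *: (delta_mx (nth d (enum D) j) 0 : 'cV_r).
have c_nth (j' : 'I_(size X)) : c (nth d (enum D) j') 0 = a j'.
  rewrite summxE (bigD1 j') //= big1 ?addr0 => [|j'' nj'']; first by rewrite !mxE !eqxx mulr1.
  rewrite !mxE eqxx andbT nth_uniq ?enum_uniq -?szX //.
  by case: eqP => [/val_inj ej|_]; [rewrite ej eqxx in nj''|rewrite mulr0].
have c_supp : supported_in c D.
  move=> k kND; rewrite summxE big1 // => j' _; rewrite !mxE.
  by case: eqP => [ek|]; [rewrite ek Dd in kND|rewrite mulr0].
have Ac0 : A *m c = 0.
  rewrite mulmx_sumr -[RHS]sum_a0; apply: eq_bigr => j' _.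
  by rewrite -scalemxAr -colE /= /X (nth_map d) // -szX.
by rewrite -c_nth (kerA c c_supp Ac0) mxE.
Qed.

Section ConicReduction.

Variables (R : realFieldType) (m r : nat) (A : 'M[R]_(m, r)).
Variables (x : 'cV[R]_r) (D : {set 'I_r}).
Hypotheses (x_ge0 : forall k, 0 <= x k 0) (x_supp : supported_in x D).

(* Carathéodory's step: move from x along the kernel direction c until the
   first coordinate of x - t c reaches zero. *)
Lemma col_admissible_setD1 (c : 'cV[R]_r) k1 :
    supported_in c D -> A *m c = 0 -> 0 < c k1 0 ->
  exists2 k0, k0 \in D & col_admissible A (A *m x) (D :\ k0).
Proof.
move=> c_supp Ac0 ck1_gt0; pose ratio k := x k 0 / c k 0.
have [k0 ck0_gt0 ratio_min] := @arg_minP _ R _ k1 (fun k => 0 < c k 0) ratio ck1_gt0.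
have k0D : k0 \in D by apply/negPn/negP => /c_supp ck0; rewrite ck0 ltxx in ck0_gt0.
exists k0 => //; exists (x - ratio k0 *: c); split; last split.
- move=> k; rewrite !mxE subr_ge0; have [ck_gt0|ck_le0] := ltrP 0 (c k 0).
    by rewrite -ler_pdivlMr //; exact: ratio_min.
  have := divr_ge0 (x_ge0 k0) (ltW ck0_gt0); have := x_ge0 k; rewrite /ratio; nra.
- move=> k; rewrite in_setD1 negb_and negbK => /orP[/eqP->|kND].
    by rewrite !mxE /ratio divfK ?subrr // gt_eqF.
  by rewrite !mxE c_supp ?x_supp ?mulr0 ?subr0.
- by rewrite mulmxBr -scalemxAr Ac0 scaler0 subr0.
Qed.

Lemma ker_supported_eq0 :
    (forall S, col_admissible A (A *m x) S -> (#|D| <= #|S|)%N) ->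
  forall c, supported_in c D -> A *m c = 0 -> c = 0.
Proof.
move=> D_min_card.
have no_pos c k : supported_in c D -> A *m c = 0 -> ~ 0 < c k 0.
  move=> c_supp Ac0 /(@col_admissible_setD1 c k c_supp Ac0) [k0 k0D /D_min_card].
  by rewrite (cardsD1 k0 D) k0D ltnn.
move=> c c_supp Ac0; apply/matrixP => k j; rewrite (ord1 j) mxE.
case: (ltrgtP (c k 0) 0) => // [c_lt0|]; last by move/(no_pos c k c_supp Ac0).
have c_supp' : supported_in (- c) D by move=> k' /c_supp; rewrite mxE => ->; rewrite oppr0.
by case: (no_pos (- c) k c_supp'); rewrite ?mulmxN ?Ac0 ?oppr0 // mxE oppr_gt0.
Qed.

End ConicReduction.

Theorem mainTheorem6 (R : realFieldType) (m n r : nat)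
    (M : 'M[R]_(m, n)) (A : 'M[R]_(m, r)) (W : 'M[R]_(r, n)) :
  (forall i j, 0 <= M i j) ->
  (forall i k, 0 <= A i k) ->
  (forall k j, 0 <= W k j) ->
  M = A *m W ->
  stable M A W ->
  forall i : 'I_n,
    free [seq col k A | k <- enum [set k : 'I_r | W k i != 0]].
Proof.
move=> _ _ W_ge0 -> [stable_col _] i; set D := [set k | W k i != 0].
have colM : col i (A *m W) = A *m col i W by rewrite !colE mulmxA.
have Wi_ge0 k : 0 <= col i W k 0 by rewrite mxE.
have Wi_supp : supported_in (col i W) D by move=> k; rewrite inE negbK mxE => /eqP.
have D_adm : col_admissible A (col i (A *m W)) D by exists (col i W); rewrite colM.
have [S S_first] := lex_first_col_exists D_adm.
have DsubS : D \subset S by apply/subsetP => k; rewrite inE; apply: stable_col S_first k.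
apply/free_cols_of_ker/(ker_supported_eq0 Wi_ge0 Wi_supp) => S' S'_adm.
rewrite (leq_trans (subset_leq_card DsubS)) // subset_le_card //.
by case: S_first => _; apply; rewrite colM.
Qed.
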